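(* The multiplicative semigroup $(\mathbb N,\cdot)$ of positive integers is left and right fairly amenable.
   Context: For a semigroup $U$, $s\in U$, $A\subseteq U$: $s$ acts injectively on the left (right) of $A$ if $a\mapsto sa$ ($a\mapsto as$) is injective on $A$. A finitely-additive probability measure on $U$ is $\mu:\mathcal P(U)\to[0,1]$ with $\mu(U)=1$, additive on disjoint sets; it is left fairly invariant if $\mu(sA)=\mu(A)$ whenever $s$ acts injectively on the left of $A$ (right fairly invariant analogously with $As$). $U$ is left (right) fairly amenable if such a measure exists. *)

From Stdlib Require Import Reals PArith.
Open Scope R_scope.

Definition set_full {U : Type} : U -> Prop := fun _ => True.
Definition set_union {U : Type} (A B : U -> Prop) : U -> Prop :=
  fun x => A x \/ B x.
Definition set_disjoint {U : Type} (A B : U -> Prop) : Prop :=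
  forall x, A x -> B x -> False.

Definition left_translate {U : Type} (op : U -> U -> U) (s : U) (A : U -> Prop)
  : U -> Prop := fun x => exists a, A a /\ x = op s a.
Definition right_translate {U : Type} (op : U -> U -> U) (A : U -> Prop) (s : U)
  : U -> Prop := fun x => exists a, A a /\ x = op a s.

Definition acts_inj_left {U : Type} (op : U -> U -> U) (s : U) (A : U -> Prop) :=
  forall a b, A a -> A b -> op s a = op s b -> a = b.
Definition acts_inj_right {U : Type} (op : U -> U -> U) (s : U) (A : U -> Prop) :=
  forall a b, A a -> A b -> op a s = op b s -> a = b.

Definition fa_prob_measure {U : Type} (mu : (U -> Prop) -> R) : Prop :=
  (forall A, 0 <= mu A <= 1) /\
  mu set_full = 1 /\
  (forall A B, set_disjoint A B -> mu (set_union A B) = mu A + mu B).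

Definition left_fairly_invariant {U : Type} (op : U -> U -> U)
  (mu : (U -> Prop) -> R) : Prop :=
  forall s A, acts_inj_left op s A -> mu (left_translate op s A) = mu A.
Definition right_fairly_invariant {U : Type} (op : U -> U -> U)
  (mu : (U -> Prop) -> R) : Prop :=
  forall s A, acts_inj_right op s A -> mu (right_translate op A s) = mu A.

Definition left_fairly_amenable {U : Type} (op : U -> U -> U) : Prop :=
  exists mu, fa_prob_measure mu /\ left_fairly_invariant op mu.
Definition right_fairly_amenable {U : Type} (op : U -> U -> U) : Prop :=
  exists mu, fa_prob_measure mu /\ right_fairly_invariant op mu.

From Stdlib Require Import Reals PArith Lra Lia List.
From Stdlib Require Import ClassicalEpsilon FunctionalExtensionality PropExtensionality.
From mathcomp Require filter ssrnat.
Open Scope R_scope.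

(* We prove more generally that every countable, commutative, cancellative
   semigroup (U, op) carries a finitely additive probability measure on all of
   P(U) that is invariant under every translation; by commutativity left and
   right translations coincide, and by cancellativity the injectivity side
   conditions of fair invariance are automatic.

   Enumerate U as e_0, e_1, ...  The n-th approximate mean of A is obtained by
   averaging the indicator of A along the geometric progressions
   x, t x, ..., t^n x successively for t = e_0, ..., e_(n-1), evaluated at e_0.
   These averaging operators commute with each other and with translations, and
   the average along the progression of t changes by at most 1/(n+1) when the
   function is translated by t (a telescoping sum).  Hence the n-th approximate
   mean is finitely additive and 1/(n+1)-almost invariant under e_0 ... e_(n-1).
   A limit along a free ultrafilter on nat (which exists by the ultrafilter
   lemma) turns these approximate means into an exactly invariant mean. *)

Lemma sum_f_R0_swap (f : nat -> nat -> R) (n m : nat) :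
  sum_f_R0 (fun a => sum_f_R0 (fun b => f a b) m) n =
  sum_f_R0 (fun b => sum_f_R0 (fun a => f a b) n) m.
Proof.
  induction n as [|n IH]; simpl.
  - reflexivity.
  - rewrite IH, <- plus_sum. reflexivity.
Qed.

Lemma sum_f_R0_telescope (f : nat -> R) (n : nat) :
  sum_f_R0 (fun a => f (S a) - f a) n = f (S n) - f O.
Proof. induction n as [|n IH]; simpl; [|rewrite IH]; ring. Qed.

Lemma Un_cv_dominated_inv_succ (u : nat -> R) (N : nat) :
  (forall n, (N <= n)%nat -> Rabs (u n) <= / INR (S n)) -> Un_cv u 0.
Proof.
  intros Hu eps Heps.
  destruct (archimed_cor1 eps Heps) as [M [HM HMpos]].
  exists (max N M). intros n Hn. unfold R_dist. rewrite Rminus_0_r.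
  assert (Hinv : / INR (S n) <= / INR M).
  { apply Rinv_le_contravar; [apply lt_0_INR; lia | apply le_INR; lia]. }
  specialize (Hu n ltac:(lia)). lra.
Qed.

Record free_ultrafilter (F : (nat -> Prop) -> Prop) : Prop := {
  uf_superset : forall A B : nat -> Prop, (forall n, A n -> B n) -> F A -> F B;
  uf_meet : forall A B : nat -> Prop, F A -> F B -> F (fun n => A n /\ B n);
  uf_proper : ~ F (fun _ => False);
  uf_ultra : forall A : nat -> Prop, F A \/ F (fun n => ~ A n);
  uf_cofinite : forall N : nat, F (fun n => (N <= n)%nat) }.

Lemma free_ultrafilter_exists : exists F, free_ultrafilter F.
Proof.
  destruct (filter.ultraFilterLemma filter.eventually_filter) as [G [HG Hsub]].
  exists G; split.
  - intros A B HAB. apply filter.filterS. exact HAB.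
  - intros A B. apply filter.filterI.
  - exact (filter.filter_not_empty G).
  - intro A. exact (filter.in_ultra_setVsetC A HG).
  - intro N. apply Hsub. exists N; [exact I|].
    intros n Hn. apply (Bool.reflect_iff _ _ ssrnat.leP). exact Hn.
Qed.

Section UltrafilterLimit.

Variable F : (nat -> Prop) -> Prop.
Hypothesis HF : free_ultrafilter F.

(* The F-limit of x is the supremum of the levels r in [0,1] that x exceeds
   F-almost everywhere (0 being always admitted). *)
Definition ulim_levels (x : nat -> R) (r : R) : Prop :=
  r = 0 \/ (r <= 1 /\ F (fun n => r <= x n)).

Lemma ulim_levels_bound (x : nat -> R) : bound (ulim_levels x).
Proof. exists 1. intros r [->|[Hr _]]; lra. Qed.

Lemma ulim_levels_inhabited (x : nat -> R) : exists r, ulim_levels x r.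
Proof. exists 0; left; reflexivity. Qed.

Definition ulim (x : nat -> R) : R :=
  proj1_sig (completeness (ulim_levels x) (ulim_levels_bound x)
                          (ulim_levels_inhabited x)).

Lemma ulim_is_lub (x : nat -> R) : is_lub (ulim_levels x) (ulim x).
Proof. unfold ulim. destruct completeness as [l Hl]. exact Hl. Qed.

Lemma ulim_unit_interval (x : nat -> R) : 0 <= ulim x <= 1.
Proof.
  destruct (ulim_is_lub x) as [Hub Hleast]. split.
  - apply Hub. left; reflexivity.
  - apply Hleast. intros r [->|[Hr _]]; lra.
Qed.

Lemma uf_inhabited (A : nat -> Prop) : F A -> exists n, A n.
Proof.
  intro HA. apply NNPP. intro Hnone. apply (uf_proper F HF).
  apply (uf_superset F HF A); [|exact HA].
  intros n Hn. apply Hnone. exists n. exact Hn.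
Qed.

Lemma ulim_near (x : nat -> R) : (forall n, 0 <= x n <= 1) ->
  forall e, 0 < e -> F (fun n => Rabs (x n - ulim x) < e).
Proof.
  intros Hx e He.
  destruct (ulim_is_lub x) as [Hub Hleast]. set (l := ulim x) in *.
  assert (Hbelow : F (fun n => l - e < x n)).
  { destruct (Rlt_le_dec (l - e) 0) as [Hneg|Hnonneg].
    - apply (uf_superset F HF (fun n => (0 <= n)%nat)); [|apply (uf_cofinite F HF)].
      intros n _. specialize (Hx n). lra.
    - destruct (uf_ultra F HF (fun n => l - e < x n)) as [H|H]; [exact H|].
      exfalso. assert (l <= l - e); [|lra].
      apply Hleast. intros r [->|[_ Hr]]; [exact Hnonneg|].
      destruct (uf_inhabited _ (uf_meet F HF _ _ Hr H)) as [n [H1 H2]]. lra. }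
  assert (Habove : F (fun n => x n < l + e)).
  { destruct (uf_ultra F HF (fun n => x n < l + e)) as [H|H]; [exact H|].
    exfalso. destruct (Rle_lt_dec (l + e) 1) as [Hle|Hgt].
    - assert (l + e <= l); [|lra]. apply Hub. right. split; [exact Hle|].
      exact (uf_superset F HF _ _ (fun n Hn => Rnot_lt_le _ _ Hn) H).
    - destruct (uf_inhabited _ H) as [n Hn]. specialize (Hx n). lra. }
  refine (uf_superset F HF _ _ _ (uf_meet F HF _ _ Hbelow Habove)).
  intros n [H1 H2]. apply Rabs_def1; lra.
Qed.

Lemma ulim_unique (x : nat -> R) (a : R) : (forall n, 0 <= x n <= 1) ->
  (forall e, 0 < e -> F (fun n => Rabs (x n - a) < e)) -> ulim x = a.
Proof.
  intros Hx Hnear. apply NNPP. intro Hneq.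
  set (e := Rabs (ulim x - a) / 2).
  assert (He : 0 < e).
  { pose proof (Rabs_pos_lt _ (Rminus_eq_contra _ _ Hneq)). unfold e; lra. }
  destruct (uf_inhabited _ (uf_meet F HF _ _ (Hnear e He) (ulim_near x Hx e He)))
    as [n [H1 H2]].
  pose proof (Rabs_triang (ulim x - x n) (x n - a)) as Htri.
  replace (ulim x - x n + (x n - a)) with (ulim x - a) in Htri by ring.
  rewrite Rabs_minus_sym in H2. unfold e in *. lra.
Qed.

Lemma ulim_const (x : nat -> R) (c : R) : 0 <= c <= 1 ->
  (forall n, x n = c) -> ulim x = c.
Proof.
  intros Hc Hx. apply ulim_unique; [intro n; rewrite Hx; exact Hc|].
  intros e He. apply (uf_superset F HF (fun n => (0 <= n)%nat)); [|apply (uf_cofinite F HF)].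
  intros n _. rewrite Hx, Rminus_diag, Rabs_R0. exact He.
Qed.

Lemma ulim_add (x y : nat -> R) : (forall n, 0 <= x n <= 1) ->
  (forall n, 0 <= y n <= 1) -> (forall n, 0 <= x n + y n <= 1) ->
  ulim (fun n => x n + y n) = ulim x + ulim y.
Proof.
  intros Hx Hy Hxy. apply ulim_unique; [exact Hxy|]. intros e He.
  refine (uf_superset F HF _ _ _
    (uf_meet F HF _ _ (ulim_near x Hx (e/2) ltac:(lra)) (ulim_near y Hy (e/2) ltac:(lra)))).
  intros n [H1 H2].
  pose proof (Rabs_triang (x n - ulim x) (y n - ulim y)) as Htri.
  replace (x n - ulim x + (y n - ulim y)) with (x n + y n - (ulim x + ulim y)) in Htri
    by ring.
  lra.
Qed.

(* Asymptotically equal [0,1]-valued sequences have the same F-limit;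
   this is where freeness of F is used. *)
Lemma ulim_asymptotic (x y : nat -> R) : (forall n, 0 <= x n <= 1) ->
  (forall n, 0 <= y n <= 1) -> Un_cv (fun n => x n - y n) 0 -> ulim y = ulim x.
Proof.
  intros Hx Hy Hcv. apply ulim_unique; [exact Hy|]. intros e He.
  destruct (Hcv (e/2) ltac:(lra)) as [N HN].
  refine (uf_superset F HF _ _ _
    (uf_meet F HF _ _ (uf_cofinite F HF N) (ulim_near x Hx (e/2) ltac:(lra)))).
  intros n [Hn Hclose]. specialize (HN n Hn). unfold R_dist in HN.
  rewrite Rminus_0_r in HN.
  pose proof (Rabs_triang (y n - x n) (x n - ulim x)) as Htri.
  replace (y n - x n + (x n - ulim x)) with (y n - ulim x) in Htri by ring.
  rewrite Rabs_minus_sym in HN. lra.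
Qed.

End UltrafilterLimit.

Section CommutativeCancellativeSemigroup.

Variable U : Type.
Variable op : U -> U -> U.
Hypothesis op_assoc : forall x y z, op x (op y z) = op (op x y) z.
Hypothesis op_comm : forall x y, op x y = op y x.
Hypothesis op_cancel : forall s x y, op s x = op s y -> x = y.
Variable enum : nat -> U.
Hypothesis enum_surj : forall s, exists k, enum k = s.

Lemma op_left_comm (s t x : U) : op s (op t x) = op t (op s x).
Proof. rewrite !op_assoc, (op_comm s t). reflexivity. Qed.

Lemma iter_op_comm (a : nat) (s t x : U) :
  Nat.iter a (op t) (op s x) = op s (Nat.iter a (op t) x).
Proof.
  induction a as [|a IH]; simpl; [reflexivity|]. rewrite IH. apply op_left_comm.
Qed.

Lemma iter_iter_comm (a b : nat) (s t x : U) :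
  Nat.iter b (op t) (Nat.iter a (op s) x) = Nat.iter a (op s) (Nat.iter b (op t) x).
Proof.
  induction b as [|b IH]; simpl; [reflexivity|]. rewrite IH.
  symmetry. apply iter_op_comm.
Qed.

Definition shift (t : U) (g : U -> R) : U -> R := fun x => g (op t x).

Definition avg (n : nat) (t : U) (g : U -> R) : U -> R :=
  fun x => sum_f_R0 (fun a => g (Nat.iter a (op t) x)) n / INR (S n).

Record mean_operator (M : (U -> R) -> U -> R) : Prop := {
  mean_ext : forall g h, (forall y, g y = h y) -> forall x, M g x = M h x;
  mean_add : forall g h x, M (fun y => g y + h y) x = M g x + M h x;
  mean_unit_interval : forall g, (forall y, 0 <= g y <= 1) ->
    forall x, 0 <= M g x <= 1;
  mean_one : forall x, M (fun _ => 1) x = 1;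
  mean_shift : forall t g x, M (shift t g) x = M g (op t x) }.

Lemma INR_succ_pos (n : nat) : 0 < INR (S n).
Proof. apply lt_0_INR; lia. Qed.

Lemma avg_mean_operator (n : nat) (t : U) : mean_operator (avg n t).
Proof.
  pose proof (INR_succ_pos n) as Hpos. split; unfold avg.
  - intros g h Hgh x. f_equal. apply sum_eq. intros a _. apply Hgh.
  - intros g h x. rewrite plus_sum. field. lra.
  - intros g Hg x.
    assert (Hsum : 0 <= sum_f_R0 (fun a => g (Nat.iter a (op t) x)) n <= INR (S n)).
    { split; [apply cond_pos_sum; intro a; apply Hg|].
      rewrite <- (Rmult_1_l (INR (S n))), <- sum_cte.
      apply sum_Rle. intros a _. apply Hg. }
    split.
    + apply Rle_mult_inv_pos; lra.
    + apply Rmult_le_reg_r with (INR (S n)); [exact Hpos|].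
      unfold Rdiv. rewrite Rmult_assoc, Rinv_l by lra. lra.
  - intro x. rewrite sum_cte. field. lra.
  - intros s g x. unfold shift. f_equal. apply sum_eq. intros a _.
    rewrite iter_op_comm. reflexivity.
Qed.

Lemma compose_mean_operator (M N : (U -> R) -> U -> R) :
  mean_operator M -> mean_operator N -> mean_operator (fun g => M (N g)).
Proof.
  intros HM HN. split.
  - intros g h Hgh. apply (mean_ext M HM). apply (mean_ext N HN). exact Hgh.
  - intros g h x. rewrite (mean_ext M HM _ _ (mean_add N HN g h)).
    apply (mean_add M HM).
  - intros g Hg. apply (mean_unit_interval M HM).
    apply (mean_unit_interval N HN). exact Hg.
  - intro x. rewrite (mean_ext M HM _ _ (mean_one N HN)). apply (mean_one M HM).
  - intros t g x. rewrite (mean_ext M HM _ _ (mean_shift N HN t g)).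
    apply (mean_shift M HM).
Qed.

Lemma avg_comm (n : nat) (s t : U) (g : U -> R) (x : U) :
  avg n s (avg n t g) x = avg n t (avg n s g) x.
Proof.
  unfold avg. f_equal. unfold Rdiv. rewrite <- !scal_sum. f_equal.
  rewrite sum_f_R0_swap. f_equal. apply functional_extensionality. intro b.
  f_equal. apply functional_extensionality. intro a.
  rewrite iter_iter_comm. reflexivity.
Qed.

(* Averaging along t is almost invariant under translation by t: the
   difference telescopes to two terms divided by n+1. *)
Lemma avg_shift_almost_invariant (n : nat) (t : U) (h : U -> R) (x : U) :
  (forall y, 0 <= h y <= 1) ->
  Rabs (avg n t (shift t h) x - avg n t h x) <= / INR (S n).
Proof.
  intro Hh. pose proof (INR_succ_pos n) as Hpos.
  set (f := fun a => h (Nat.iter a (op t) x)).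
  assert (Hdiff : avg n t (shift t h) x - avg n t h x = (f (S n) - f O) / INR (S n)).
  { unfold avg, shift. rewrite <- (sum_f_R0_telescope f), minus_sum.
    unfold Rdiv. rewrite Rmult_minus_distr_r. reflexivity. }
  rewrite Hdiff. unfold Rdiv. rewrite Rabs_mult, (Rabs_right (/ _)).
  2:{ left; apply Rinv_0_lt_compat; exact Hpos. }
  rewrite <- (Rmult_1_l (/ INR (S n))) at 2.
  apply Rmult_le_compat_r; [left; apply Rinv_0_lt_compat; exact Hpos|].
  pose proof (Hh (Nat.iter (S n) (op t) x)). pose proof (Hh x).
  apply Rabs_le. unfold f; simpl in *; lra.
Qed.

Fixpoint avgs (n : nat) (l : list U) (g : U -> R) : U -> R :=
  match l with
  | nil => g
  | t :: l => avg n t (avgs n l g)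
  end.

Lemma avgs_mean_operator (n : nat) (l : list U) : mean_operator (avgs n l).
Proof.
  induction l as [|t l IH]; simpl.
  - split; auto.
  - exact (compose_mean_operator _ _ (avg_mean_operator n t) IH).
Qed.

(* Since averaging operators commute, any one of them can be applied last. *)
Lemma avgs_factor (n : nat) (t : U) (l : list U) : In t l ->
  exists l', forall g x, avgs n l g x = avg n t (avgs n l' g) x.
Proof.
  induction l as [|s l IH]; simpl; intros Hin; [contradiction|].
  destruct Hin as [<-|Hin].
  - exists l. reflexivity.
  - destruct (IH Hin) as [l' Hl']. exists (s :: l'). intros g x. simpl.
    rewrite (mean_ext _ (avg_mean_operator n s) _ _ (Hl' g)). apply avg_comm.
Qed.

Lemma avgs_shift_almost_invariant (n : nat) (t : U) (l : list U) (g : U -> R) (x : U) :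
  In t l -> (forall y, 0 <= g y <= 1) ->
  Rabs (avgs n l (shift t g) x - avgs n l g x) <= / INR (S n).
Proof.
  intros Hin Hg. destruct (avgs_factor n t l Hin) as [l' Hl']. rewrite !Hl'.
  rewrite (mean_ext _ (avg_mean_operator n t) _ (shift t (avgs n l' g))).
  - apply avg_shift_almost_invariant.
    apply (mean_unit_interval _ (avgs_mean_operator n l')). exact Hg.
  - apply (mean_shift _ (avgs_mean_operator n l')).
Qed.

Definition indicator (A : U -> Prop) (x : U) : R :=
  if excluded_middle_informative (A x) then 1 else 0.

Lemma indicator_unit_interval (A : U -> Prop) (x : U) : 0 <= indicator A x <= 1.
Proof. unfold indicator. destruct excluded_middle_informative; lra. Qed.

(* By cancellativity, x lies in A exactly when t x lies in t A. *)
Lemma indicator_translate (t : U) (A : U -> Prop) (x : U) :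
  indicator A x = shift t (indicator (left_translate op t A)) x.
Proof.
  unfold shift, indicator, left_translate.
  destruct (excluded_middle_informative (A x)) as [HA|HA];
  destruct excluded_middle_informative as [[a [Ha Heq]]|Hno]; try reflexivity.
  - exfalso. apply Hno. exists x. split; [exact HA|reflexivity].
  - exfalso. apply HA. rewrite (op_cancel _ _ _ Heq). exact Ha.
Qed.

Fixpoint first_elements (n : nat) : list U :=
  match n with
  | O => nil
  | S n => enum n :: first_elements n
  end.

Lemma In_first_elements (k n : nat) : (k < n)%nat -> In (enum k) (first_elements n).
Proof.
  induction n as [|n IH]; simpl; intro Hk; [lia|].
  destruct (Nat.eq_dec k n) as [->|Hne]; [left; reflexivity|].
  right. apply IH. lia.
Qed.

Definition approx_mean (n : nat) (A : U -> Prop) : R :=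
  avgs n (first_elements n) (indicator A) (enum O).

Lemma approx_mean_unit_interval (n : nat) (A : U -> Prop) : 0 <= approx_mean n A <= 1.
Proof.
  apply (mean_unit_interval _ (avgs_mean_operator _ _)). apply indicator_unit_interval.
Qed.

Lemma approx_mean_full (n : nat) : approx_mean n set_full = 1.
Proof.
  unfold approx_mean.
  rewrite (mean_ext _ (avgs_mean_operator _ _) _ (fun _ => 1)).
  - apply (mean_one _ (avgs_mean_operator _ _)).
  - intro y. unfold indicator, set_full.
    destruct excluded_middle_informative as [_|Hno]; [reflexivity|contradiction (Hno I)].
Qed.

Lemma approx_mean_union (n : nat) (A B : U -> Prop) : set_disjoint A B ->
  approx_mean n (set_union A B) = approx_mean n A + approx_mean n B.
Proof.
  intro Hdisj. unfold approx_mean. rewrite <- (mean_add _ (avgs_mean_operator _ _)).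
  apply (mean_ext _ (avgs_mean_operator _ _)). intro y.
  unfold indicator, set_union.
  destruct (excluded_middle_informative (A y)) as [HA|HA];
  destruct (excluded_middle_informative (B y)) as [HB|HB];
  destruct excluded_middle_informative as [HAB|HAB];
  try (exfalso; exact (Hdisj y HA HB)); try tauto; lra.
Qed.

Lemma approx_mean_translate (k n : nat) (A : U -> Prop) : (k < n)%nat ->
  Rabs (approx_mean n A - approx_mean n (left_translate op (enum k) A)) <= / INR (S n).
Proof.
  intro Hk. unfold approx_mean.
  rewrite (mean_ext _ (avgs_mean_operator _ _) _ _ (indicator_translate (enum k) A)).
  apply avgs_shift_almost_invariant.
  - apply In_first_elements. exact Hk.
  - apply indicator_unit_interval.
Qed.

Lemma right_translate_comm (A : U -> Prop) (s : U) :
  right_translate op A s = left_translate op s A.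
Proof.
  apply functional_extensionality. intro x. apply propositional_extensionality.
  unfold right_translate, left_translate.
  split; intros [a [Ha ->]]; exists a; split; auto.
Qed.

Section InvariantMean.

Variable F : (nat -> Prop) -> Prop.
Hypothesis HF : free_ultrafilter F.

Definition invariant_mean (A : U -> Prop) : R := ulim F (fun n => approx_mean n A).

Lemma invariant_mean_fa_prob : fa_prob_measure invariant_mean.
Proof.
  unfold invariant_mean. split; [|split].
  - intro A. apply ulim_unit_interval.
  - apply (ulim_const F HF); [lra|]. apply approx_mean_full.
  - intros A B Hdisj.
    rewrite <- (ulim_add F HF); try (intro n; apply approx_mean_unit_interval).
    + f_equal. apply functional_extensionality. intro n. apply approx_mean_union.
      exact Hdisj.
    + intro n. rewrite <- approx_mean_union by exact Hdisj.
      apply approx_mean_unit_interval.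
Qed.

(* Exact invariance: for s = e_k the approximate means of sA and A differ by
   at most 1/(n+1) once n > k, so their ultrafilter limits agree. *)
Lemma invariant_mean_translate (s : U) (A : U -> Prop) :
  invariant_mean (left_translate op s A) = invariant_mean A.
Proof.
  destruct (enum_surj s) as [k <-]. unfold invariant_mean.
  apply (ulim_asymptotic F HF); try (intro n; apply approx_mean_unit_interval).
  apply (Un_cv_dominated_inv_succ _ (S k)). intros n Hn.
  apply approx_mean_translate. lia.
Qed.

End InvariantMean.

Theorem comm_cancel_countable_fairly_amenable :
  left_fairly_amenable op /\ right_fairly_amenable op.
Proof.
  destruct free_ultrafilter_exists as [F HF].
  split; exists (invariant_mean F); split; try apply (invariant_mean_fa_prob F HF).
  - intros s A _. apply (invariant_mean_translate F HF).
  - intros s A _. rewrite right_translate_comm. apply (invariant_mean_translate F HF).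
Qed.

End CommutativeCancellativeSemigroup.

Theorem mainTheorem18 :
  left_fairly_amenable Pos.mul /\ right_fairly_amenable Pos.mul.
Proof.
  assert (Hcancel : forall s x y, (s * x = s * y)%positive -> x = y).
  { intros s x y. apply Pos.mul_cancel_l. }
  apply (comm_cancel_countable_fairly_amenable positive Pos.mul Pos.mul_assoc
           Pos.mul_comm Hcancel Pos.of_succ_nat).
  intro p. exists (Nat.pred (Pos.to_nat p)). apply SuccNat2Pos.inv.
  pose proof (Pos2Nat.is_pos p). lia.
Qed.
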